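(* For every integer $m\ge2$ and every $\alpha\in[0,1]$, no randomized social choice rule whose output distribution depends only on the plurality scores $(\mathrm{plu}(c))_{c\in C}$ has distortion smaller than $2+\alpha-2/m$ on $\alpha$-decisive metric spaces.
   Context: An election: voters $V=\{1,\dots,n\}$, a fixed finite set $C$ of $m$ candidates, a profile of linear orders over $C$; $\mathrm{top}(i)$ is $i$'s first choice; $\mathrm{plu}(c)=|\{i:\mathrm{top}(i)=c\}|$ (plurality score). A distance function $d$ on $V\cup C$ is nonnegative, symmetric and satisfies the triangle inequality (co-location allowed); consistent with the profile if $d(i,c)\le d(i,c')$ whenever $i$ ranks $c$ above $c'$; $\alpha$-decisive if $d(i,\mathrm{top}(i))\le\alpha\,d(i,c)$ for all $i$ and $c\ne\mathrm{top}(i)$. $\mathrm{SC}(c)=\sum_i d(i,c)$. A randomized rule maps profiles (any number of voters) to probability distributions over $C$; its distortion on $\alpha$-decisive spaces is $\sup_\sigma\sup_d\mathbb{E}[\mathrm{SC}(f(\sigma))]/\min_c\mathrm{SC}(c)$ over $\alpha$-decisive consistent $d$. *)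

From mathcomp Require Import all_boot all_order all_algebra all_fingroup.
Set Implicit Arguments. Unset Strict Implicit. Unset Printing Implicit Defensive.
Import Order.TTheory GRing.Theory Num.Theory.
Local Open Scope ring_scope.

(* A profile assigns to each voter a linear order over candidates, encoded
   as a rank permutation: voter i ranks c above c' iff rank i c < rank i c'
   (position 0 = first choice). *)
Definition profile (m n : nat) := 'I_n -> {perm 'I_m}.

Definition is_top (m n : nat) (p : profile m n) (i : 'I_n) (c : 'I_m) : bool :=
  [forall c' : 'I_m, (c' != c) ==> (p i c < p i c')%N].

Definition plu (m n : nat) (p : profile m n) (c : 'I_m) : nat :=
  #|[set i : 'I_n | is_top p i c]|.

Definition rule (R : Type) (m : nat) := forall n : nat, profile m n -> 'I_m -> R.

Definition is_distribution (R : numDomainType) (m : nat) (q : 'I_m -> R) :=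
  (forall c, 0 <= q c) /\ \sum_(c < m) q c = 1.

Definition is_randomized_rule (R : numDomainType) (m : nat) (f : rule R m) :=
  forall n (p : profile m n), is_distribution (f n p).

Definition plurality_based (R : Type) (m : nat) (f : rule R m) :=
  forall n n' (p : profile m n) (p' : profile m n'),
    (forall c, plu p c = plu p' c) -> f n p = f n' p'.

(* Points of the space V ∪ C: inl voter / inr candidate. *)
Definition pt (m n : nat) := ('I_n + 'I_m)%type.

(* distance function: nonnegative, symmetric, triangle inequality,
   d(x,x)=0; distinct points may be co-located (pseudometric). *)
Definition is_distance (R : numDomainType) (T : Type) (d : T -> T -> R) :=
  [/\ (forall x y, 0 <= d x y), (forall x, d x x = 0),
      (forall x y, d x y = d y x) & (forall x y z, d x z <= d x y + d y z)].

Definition consistent (R : numDomainType) (m n : nat) (p : profile m n)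
    (d : pt m n -> pt m n -> R) :=
  forall i c c', (p i c < p i c')%N -> d (inl i) (inr c) <= d (inl i) (inr c').

Definition decisive (R : numDomainType) (alpha : R) (m n : nat) (p : profile m n)
    (d : pt m n -> pt m n -> R) :=
  forall i c c', is_top p i c -> c' != c ->
    d (inl i) (inr c) <= alpha * d (inl i) (inr c').

Definition SC (R : numDomainType) (m n : nat) (d : pt m n -> pt m n -> R)
    (c : 'I_m) : R := \sum_(i < n) d (inl i) (inr c).

Definition expected_SC (R : numDomainType) (m n : nat) (q : 'I_m -> R)
    (d : pt m n -> pt m n -> R) : R := \sum_(c < m) q c * SC d c.

Definition distortion_at_least (R : numDomainType) (m : nat) (alpha : R)
    (f : rule R m) (X : R) :=
  forall r : R, r < X ->
    exists n (p : profile m n) (d : pt m n -> pt m n -> R) (copt : 'I_m),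
      [/\ is_distance d, consistent p d, decisive alpha p d,
          (forall c, SC d copt <= SC d c) &
          r * SC d copt < expected_SC (f n p) d].

From mathcomp Require Import all_boot all_order all_algebra all_fingroup.
From mathcomp Require Import ring lra.
Set Implicit Arguments. Unset Strict Implicit.
Import Order.TTheory GRing.Theory Num.Theory.
Local Open Scope ring_scope.

(* Take m voters and m candidates, voter i ranking candidate i first and a
   fixed candidate o second.  Every plurality score is 1 whatever o is, so a
   plurality-based rule outputs the same lottery q for all choices of o, and
   o can be chosen with q o <= 1/m.  Put voter i and candidate i on leg i of
   a star, at heights 1 and 1 + alpha, except voter and candidate o, which sit
   at the centre.  This space is consistent and alpha-decisive, o costs
   m - 1 while every other candidate costs (2 + alpha) m - 3, and the lottery
   costs at least (2 + alpha - 2/m) (m - 1). *)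

Section StarDistance.

Variables (R : realDomainType) (T : Type) (B : eqType).
Variables (branch : T -> B) (height : T -> R).
Hypothesis height_ge0 : forall x, 0 <= height x.

Definition star_dist (x y : T) : R :=
  if branch x == branch y then `|height x - height y| else height x + height y.

Lemma star_dist_ge x y : `|height x - height y| <= star_dist x y.
Proof.
rewrite /star_dist; case: eqP => // _.
by rewrite (le_trans (ler_normB _ _)) // !ger0_norm.
Qed.

Lemma star_dist_neq x y :
  branch x != branch y -> star_dist x y = height x + height y.
Proof. by rewrite /star_dist => /negPf ->. Qed.

Lemma star_dist_is_distance : is_distance star_dist.
Proof.
split.
- by move=> x y; exact: le_trans (normr_ge0 _) (star_dist_ge x y).
- by move=> x; rewrite /star_dist eqxx subrr normr0.
- by move=> x y; rewrite /star_dist eq_sym; case: eqP => _; [exact: distrC | exact: addrC].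
move=> x y z; have dxy := star_dist_ge x y; have dyz := star_dist_ge y z.
case: (eqVneq (branch x) (branch z)) => bxz.
  rewrite {1}/star_dist bxz eqxx.
  exact: le_trans (ler_distD (height y) _ _) (lerD dxy dyz).
have := ler_norm (height x - height y); rewrite distrC in dyz.
have := ler_norm (height z - height y); have := height_ge0 y.
rewrite star_dist_neq //; case: (eqVneq (branch x) (branch y)) => bxy.
  by rewrite (@star_dist_neq y z) -?bxy //; lra.
by rewrite star_dist_neq //; lra.
Qed.

End StarDistance.

Section Ballot.

Variables (m : nat) (first second : 'I_m).
Hypotheses (first0 : val first = 0%N) (second1 : val second = 1%N).

Definition ballot (o i : 'I_m) : {perm 'I_m} :=
  if i == o then tperm i first
  else (tperm i first * tperm (tperm i first o) second)%g.

Let first_neq_second : first != second.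
Proof. by rewrite -val_eqE first0 second1. Qed.

Lemma ballot_first o i : ballot o i i = first.
Proof.
rewrite /ballot; case: eqP => [_|/eqP oi]; first by rewrite tpermL.
have tpo : tperm i first o != first.
  by rewrite -{2}(tpermL i first) (inj_eq perm_inj) eq_sym.
by rewrite permM tpermL (tpermD tpo) // eq_sym.
Qed.

Lemma ballot_second o i : i != o -> ballot o i o = second.
Proof. by move=> /negPf io; rewrite /ballot io permM tpermL. Qed.

Lemma ballot_eq0 o i c : (val (ballot o i c) == 0%N) = (c == i).
Proof. by rewrite -first0 val_eqE -(ballot_first o i) (inj_eq perm_inj). Qed.

Lemma ballot_eq1 o i c : i != o -> (val (ballot o i c) == 1%N) = (c == o).
Proof. by move=> io; rewrite -second1 val_eqE -(ballot_second io) (inj_eq perm_inj). Qed.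

Lemma is_top_ballot o i c : is_top (ballot o) i c = (c == i).
Proof.
apply/forallP/eqP => [top_c|->].
  apply/eqP; apply: contraT => ci.
  move: (implyP (top_c i)); rewrite eq_sym ci (ballot_first o i) first0 ltn0.
  by move/(_ isT).
move=> c'; apply/implyP => c'i; rewrite ballot_first first0 lt0n.
by rewrite ballot_eq0.
Qed.

Lemma plu_ballot o c : plu (ballot o) c = 1%N.
Proof.
rewrite /plu -(cards1 c); apply: eq_card => i.
by rewrite !inE is_top_ballot eq_sym.
Qed.

End Ballot.

Lemma sumr_delta (R : pzSemiRingType) (I : finType) (j : I) :
  \sum_(i : I) ((i == j)%:R : R) = 1.
Proof. by rewrite (bigD1 j) //= eqxx big1 ?addr0 // => i /negPf ->. Qed.

Section Spider.

Variables (R : realFieldType) (alpha : R) (m : nat) (o : 'I_m).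
Hypothesis alpha_ge0 : 0 <= alpha.

Definition leg (x : pt m m) : 'I_m := match x with inl i => i | inr c => c end.

Definition spider_height (x : pt m m) : R :=
  match x with
  | inl i => if i == o then 0 else 1
  | inr c => if c == o then 0 else 1 + alpha
  end.

Definition spider_dist := star_dist leg spider_height.

Lemma spider_dist_is_distance : is_distance spider_dist.
Proof.
by apply: star_dist_is_distance => -[i|c] /=; case: eqP => _ //; rewrite addr_ge0.
Qed.

Lemma spider_dist_voter_cand i c :
  spider_dist (inl i) (inr c) =
  if i == o then (if c == o then 0 else 1 + alpha)
  else if c == i then alpha else if c == o then 1 else 2 + alpha.
Proof.
rewrite /spider_dist /star_dist /= [c == i]eq_sym.
case: (eqVneq i c) => [<-|_]; case: (eqVneq i o) => // _.
- by rewrite subrr normr0.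
- by rewrite distrC ger0_norm; have := alpha_ge0; lra.
- by rewrite add0r.
- by case: eqP => _; have := alpha_ge0; lra.
Qed.

Lemma SC_spider_center : SC spider_dist o = m%:R - 1.
Proof.
rewrite /SC (bigD1 o) //= spider_dist_voter_cand !eqxx add0r.
rewrite (eq_bigr (fun=> 1)) => [|i /negPf io]; last first.
  by rewrite spider_dist_voter_cand io eqxx eq_sym io.
rewrite (sumr_const (predC1 o)) cardC1 card_ord -subn1 natrB //.
exact: leq_ltn_trans (leq0n o) (ltn_ord o).
Qed.

Lemma SC_spider_leg c : c != o -> SC spider_dist c = (2 + alpha) * m%:R - 3.
Proof.
move=> co; rewrite /SC.
transitivity (\sum_(i < m) ((2 + alpha) - 2 * ((i == c)%:R : R) - ((i == o)%:R : R))).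
  apply: eq_bigr => i _; rewrite spider_dist_voter_cand (negPf co) [c == i]eq_sym.
  case: (eqVneq i o) => [io|_]; case: (eqVneq i c) => [ic|_] //=; try lra.
  by move: co; rewrite -ic io eqxx.
by rewrite !sumrB -mulr_sumr !sumr_delta sumr_const card_ord -mulr_natr; ring.
Qed.

Lemma SC_spider_center_min : (1 < m)%N -> forall c, SC spider_dist o <= SC spider_dist c.
Proof.
move=> m_gt1 c; case: (eqVneq c o) => [-> //|co].
rewrite SC_spider_center SC_spider_leg //.
have : (2 : R) <= m%:R by rewrite ler_nat.
by have := alpha_ge0; nra.
Qed.

End Spider.

Section SpiderBallots.

Variables (R : realFieldType) (alpha : R) (m : nat) (first second o : 'I_m).
Hypotheses (first0 : val first = 0%N) (second1 : val second = 1%N).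
Hypotheses (alpha_ge0 : 0 <= alpha) (alpha_le1 : alpha <= 1).

Definition rank_cost (central : bool) (k : nat) : R :=
  if central then (if k == 0%N then 0 else 1 + alpha)
  else if k == 0%N then alpha else if k == 1%N then 1 else 2 + alpha.

Lemma rank_cost_mono b k k' : (k <= k')%N -> rank_cost b k <= rank_cost b k'.
Proof.
case: b; case: k k' => [|[|k]] [|[|k']] //= _.
all: by have := alpha_ge0; have := alpha_le1; lra.
Qed.

Lemma rank_cost_top b k : (0 < k)%N -> rank_cost b 0 <= alpha * rank_cost b k.
Proof.
case: b; case: k => [|[|k]] //= _.
all: by have := alpha_ge0; nra.
Qed.

Lemma spider_dist_ballot i c :
  spider_dist alpha o (inl i) (inr c) = rank_cost (i == o) (ballot first second o i c).
Proof.
rewrite spider_dist_voter_cand // /rank_cost ballot_eq0 //.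
by case: (eqVneq i o) => [-> //|io]; rewrite ballot_eq1.
Qed.

Lemma spider_consistent : consistent (ballot first second o) (spider_dist alpha o).
Proof.
by move=> i c c' /ltnW lt_cc'; rewrite !spider_dist_ballot rank_cost_mono.
Qed.

Lemma spider_decisive : decisive alpha (ballot first second o) (spider_dist alpha o).
Proof.
move=> i c c'; rewrite is_top_ballot // => /eqP -> c'i.
rewrite !spider_dist_ballot ballot_first // first0 rank_cost_top //.
by rewrite lt0n ballot_eq0.
Qed.

End SpiderBallots.

Lemma expected_SC_two_valued (R : numDomainType) m n (q : 'I_m -> R)
    (d : pt m n -> pt m n -> R) o a b :
  \sum_c q c = 1 -> SC d o = a -> (forall c, c != o -> SC d c = b) ->
  expected_SC q d = q o * a + (1 - q o) * b.
Proof.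
move=> q1 SCo SCc; rewrite /expected_SC (bigD1 o) //= SCo; congr (_ + _).
rewrite -q1 [\sum_c q c](bigD1 o) //= (addrC (q o)) addrK mulr_suml.
by apply: eq_bigr => c co; rewrite SCc.
Qed.

Lemma exists_le_average (R : realDomainType) m (F : 'I_m -> R) :
  (0 < m)%N -> exists c, F c * m%:R <= \sum_i F i.
Proof.
move=> m_gt0; have [c _ minF] := arg_minP F (P := xpredT) (i0 := Ordinal m_gt0) isT.
exists c; have -> : F c * m%:R = \sum_(i < m) F c.
  by rewrite sumr_const card_ord mulr_natr.
by apply: ler_sum => i _; apply: minF.
Qed.

Lemma lottery_cost_gt (R : realFieldType) (M alpha x r : R) :
  2 <= M -> 0 <= alpha -> x * M <= 1 -> r < 2 + alpha - 2 / M ->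
  r * (M - 1) < x * (M - 1) + (1 - x) * ((2 + alpha) * M - 3).
Proof.
move=> M_ge2 alpha_ge0 xM r_lt; set w := M^-1 in r_lt.
have Mw : M * w = 1 by rewrite mulfV //; apply/eqP => M0; rewrite M0 in M_ge2; lra.
have w_gt0 : 0 < w by rewrite invr_gt0; lra.
have x_le_w : x <= w.
  by rewrite -(ler_pM2r w_gt0) -mulrA Mw mulr1 mul1r in xM.
have gap1 : 0 < (M - 1) * (2 + alpha - 2 * w - r) by apply: mulr_gt0; lra.
have gap2 : 0 <= (w - x) * ((1 + alpha) * M - 2) by apply: mulr_ge0; nra.
have alphaMw : alpha * (M * w) = alpha by rewrite Mw mulr1.
(* Using M w = 1, the difference of the two sides is exactly gap1 + gap2. *)
nra.
Qed.

Theorem theorem4 (R : realFieldType) (m : nat) (alpha : R) (f : rule R m) :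
  (2 <= m)%N -> 0 <= alpha <= 1 ->
  is_randomized_rule f -> plurality_based f ->
  distortion_at_least alpha f (2 + alpha - 2 / m%:R).
Proof.
move=> m_gt1 /andP[alpha_ge0 alpha_le1] f_rule f_plu r r_lt.
pose first : 'I_m := Ordinal (ltnW m_gt1).
pose second : 'I_m := Ordinal m_gt1.
pose P o : profile m m := ballot first second o.
have f_P o : f m (P o) = f m (P first) by apply: f_plu => c; rewrite !plu_ballot.
have [_ q_sum] := f_rule m (P first).
have [o q_o] := exists_le_average (f m (P first)) (ltnW m_gt1).
rewrite q_sum in q_o.
exists m, (P o), (spider_dist alpha o), o; split.
- exact: spider_dist_is_distance.
- exact: spider_consistent.
- exact: spider_decisive.
- exact: SC_spider_center_min.
rewrite f_P (expected_SC_two_valued q_sum (SC_spider_center _ _) (SC_spider_leg _)) //.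
by rewrite SC_spider_center // lottery_cost_gt // ler_nat.
Qed.
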